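(* Let $N\ge1$ and let $Y_1,\dots,Y_N$ be independent random variables, where $Y_i$ is geometrically distributed with success probability $p_i\in(0,1]$. Then $$\mathbb{P}\Big(\sum_{i=1}^NY_i>\frac{N^2}{4\sum_{i=1}^Np_i}\Big)\ge1-\frac{16}{9N}.$$
   Context: A random variable $Y$ is geometric with success probability $p$ if $\mathbb{P}(Y=s)=(1-p)^{s-1}p$ for $s=1,2,\dots$. *)

From Stdlib Require Import Reals Lra Lia.
Open Scope R_scope.

Definition geom_pmf (p : R) (s : nat) : R :=
  match s with
  | O => 0
  | S k => (1 - p) ^ k * p
  end.

(* Law of Y_0 + ... + Y_(n-1) for independent Y_i ~ Geom(p i):
   the n-fold convolution of the geometric pmfs (independence means the
   law of the sum is the convolution of the marginal laws). *)
Fixpoint law_sum (p : nat -> R) (n : nat) (s : nat) : R :=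
  match n with
  | O => if Nat.eqb s 0 then 1 else 0
  | S m => sum_f_R0 (fun k => geom_pmf (p m) k * law_sum p m (s - k)) s
  end.

Fixpoint sumR (p : nat -> R) (n : nat) : R :=
  match n with
  | O => 0
  | S m => sumR p m + p m
  end.

(* P(Y_0 + ... + Y_(n-1) > t) is the value l of the series
   sum_s [s > t] law_sum p n s. *)
Definition tail_series (p : nat -> R) (n : nat) (t : R) (s : nat) : R :=
  if Rlt_dec t (INR s) then law_sum p n s else 0.

From Stdlib Require Import Reals Lra Lia.
Open Scope R_scope.

(* Write S = Y_1 + ... + Y_N, P = p_1 + ... + p_N and t = N^2 / (4P).  For z = 1/(1+u),
   Markov's inequality applied to z^S gives P(S <= t) <= (1+u)^t E[z^S], and
   E[z^S] is the product of the generating functions p_i z / (1 - (1-p_i) z) = p_i / (u + p_i).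
   By AM-GM and 1 + x <= e^x each factor is at most e^(-1/2 + p_i/(2u)) / 2, so the choice
   u = P/N yields P(S <= t) <= (e^(1/4)/2)^N <= (3/4)^N <= 16/(9N).  The law of S is
   given by finite convolutions, so its total mass 1 is recovered from below as the mass of
   [S <= N K], which is at least 1 - sum_i (1-p_i)^K. *)

Lemma sum_f_R0_conv (a b : nat -> R) (M : nat) :
  sum_f_R0 (fun s => sum_f_R0 (fun k => a k * b (s - k)%nat) s) M =
  sum_f_R0 (fun k => a k * sum_f_R0 b (M - k)) M.
Proof.
  induction M as [|M IH]; [reflexivity|].
  rewrite (tech5 (fun s => sum_f_R0 (fun k => a k * b (s - k)%nat) s) M).
  rewrite (tech5 (fun k => a k * sum_f_R0 b (S M - k)) M), IH.
  rewrite (tech5 (fun k => a k * b (S M - k)%nat) M).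
  rewrite (sum_eq (fun k => a k * sum_f_R0 b (S M - k))
             (fun k => a k * sum_f_R0 b (M - k) + a k * b (S M - k)%nat) M).
  - rewrite sum_plus, Nat.sub_diag. simpl. ring.
  - intros i Hi. replace (S M - i)%nat with (S (M - i)) by lia. simpl. ring.
Qed.

Lemma sum_f_R0_le_prefix (f : nat -> R) (K M : nat) :
  (forall k, 0 <= f k) -> (K <= M)%nat -> sum_f_R0 f K <= sum_f_R0 f M.
Proof.
  intros Hf HKM. induction HKM as [|M _ IH]; [lra|].
  rewrite tech5. specialize (Hf (S M)). lra.
Qed.

Lemma sumR_nonneg (f : nat -> R) (n : nat) :
  (forall i, (i < n)%nat -> 0 <= f i) -> 0 <= sumR f n.
Proof.
  induction n as [|n IH]; intros Hf; simpl; [lra|].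
  assert (0 <= f n) by (apply Hf; lia).
  assert (0 <= sumR f n) by (apply IH; intros; apply Hf; lia). lra.
Qed.

Lemma sumR_pos (f : nat -> R) (n : nat) :
  (1 <= n)%nat -> (forall i, (i < n)%nat -> 0 < f i) -> 0 < sumR f n.
Proof.
  intros Hn Hf. destruct n as [|n]; [lia|]. simpl.
  assert (0 < f n) by (apply Hf; lia).
  assert (0 <= sumR f n) by (apply sumR_nonneg; intros; left; apply Hf; lia). lra.
Qed.

Lemma exp_le_compat (x y : R) : x <= y -> exp x <= exp y.
Proof. intros [Hlt | ->]; [left; apply exp_increasing|]; lra. Qed.

Lemma exp_mult_INR (n : nat) (x : R) : exp (INR n * x) = exp x ^ n.
Proof.
  induction n as [|n IH]; [simpl; rewrite Rmult_0_l; apply exp_0|].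
  rewrite S_INR. simpl. rewrite <- IH, <- exp_plus. f_equal. ring.
Qed.

Lemma exp_quarter_le : exp (/ 4) <= 3 / 2.
Proof.
  assert (H4 : exp (/ 4) ^ 4 <= 3).
  { rewrite <- exp_mult_INR. replace (INR 4 * / 4) with 1 by (simpl; field).
    apply exp_le_3. }
  pose proof (exp_pos (/ 4)) as Hpos. simpl in H4.
  destruct (Rle_lt_dec (exp (/ 4)) (3 / 2)) as [|Hgt]; [assumption|].
  set (x := exp (/ 4)) in *.
  assert (x * x > 9 / 4) by nra. nra.
Qed.

Lemma INR_mul_pow_3_4_le (n : nat) : INR n * (3 / 4) ^ n <= 16 / 9.
Proof.
  assert (Hge3 : forall m, INR (m + 3) * (3 / 4) ^ (m + 3) <= 81 / 64).
  { induction m as [|m IH]; [simpl; lra|].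
    replace (S m + 3)%nat with (S (m + 3)) by lia.
    rewrite S_INR. simpl pow.
    assert (3 <= INR (m + 3)) by (rewrite plus_INR; simpl; pose proof (pos_INR m); lra).
    assert (0 <= (3 / 4) ^ (m + 3)) by (apply pow_le; lra).
    nra. }
  destruct n as [|[|[|n]]]; [simpl; lra .. |].
  specialize (Hge3 n). replace (n + 3)%nat with (S (S (S n))) in Hge3 by lia. lra.
Qed.

Lemma sumR_pow_eventually_le (q : nat -> R) (n : nat) :
  (forall i, (i < n)%nat -> 0 <= q i < 1) ->
  forall d, 0 < d -> exists K, forall K', (K <= K')%nat -> sumR (fun i => q i ^ K') n <= d.
Proof.
  induction n as [|n IH]; intros Hq d Hd.
  - exists O. intros. simpl. lra.
  - assert (Hqn : 0 <= q n < 1) by (apply Hq; lia).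
    destruct (IH (fun i Hi => Hq i ltac:(lia)) (d / 2)) as [K1 HK1]; [lra|].
    destruct (pow_lt_1_zero (q n)) with (y := d / 2) as [K2 HK2];
      [rewrite Rabs_right; lra | lra |].
    exists (Nat.max K1 K2). intros K' HK'. simpl.
    specialize (HK1 K' ltac:(lia)). specialize (HK2 K' ltac:(lia)).
    pose proof (Rle_abs (q n ^ K')). lra.
Qed.

Lemma geom_pmf_nonneg (p : R) (k : nat) : 0 < p <= 1 -> 0 <= geom_pmf p k.
Proof.
  intros Hp. destruct k; simpl; [lra|].
  apply Rmult_le_pos; [apply pow_le|]; lra.
Qed.

Lemma law_sum_nonneg (p : nat -> R) (n s : nat) :
  (forall i, (i < n)%nat -> 0 < p i <= 1) -> 0 <= law_sum p n s.
Proof.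
  revert s. induction n as [|n IH]; intros s Hp; simpl.
  - destruct (Nat.eqb s 0); lra.
  - apply cond_pos_sum. intro k. apply Rmult_le_pos.
    + apply geom_pmf_nonneg, Hp; lia.
    + apply IH. intros; apply Hp; lia.
Qed.

Definition geom_pgf (p z : R) : R := p * z / (1 - (1 - p) * z).

Lemma geom_pgf_nonneg (p z : R) : 0 < p <= 1 -> 0 < z <= 1 -> 0 <= geom_pgf p z.
Proof.
  intros Hp Hz. unfold geom_pgf, Rdiv. apply Rmult_le_pos; [nra|].
  left. apply Rinv_0_lt_compat. nra.
Qed.

Lemma geom_pgf_1 (p : R) : 0 < p -> geom_pgf p 1 = 1.
Proof. intros Hp. unfold geom_pgf. field. lra. Qed.

Lemma sum_geom_pmf_pow (p z : R) (M : nat) : 0 < p <= 1 -> 0 < z <= 1 ->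
  sum_f_R0 (fun k => geom_pmf p k * z ^ k) M = geom_pgf p z * (1 - ((1 - p) * z) ^ M).
Proof.
  intros Hp Hz. unfold geom_pgf.
  assert (1 - (1 - p) * z <> 0) by nra.
  induction M as [|M IH]; [simpl; field; auto|].
  rewrite tech5, IH. simpl geom_pmf. rewrite !Rpow_mult_distr. simpl pow. field. auto.
Qed.

Lemma sum_geom_pmf_pow_le (p z : R) (M : nat) : 0 < p <= 1 -> 0 < z <= 1 ->
  sum_f_R0 (fun k => geom_pmf p k * z ^ k) M <= geom_pgf p z.
Proof.
  intros Hp Hz. rewrite sum_geom_pmf_pow by assumption.
  pose proof (geom_pgf_nonneg p z Hp Hz).
  assert (0 <= ((1 - p) * z) ^ M) by (apply pow_le; nra).
  nra.
Qed.

Fixpoint prod_geom_pgf (p : nat -> R) (z : R) (n : nat) : R :=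
  match n with
  | O => 1
  | S m => prod_geom_pgf p z m * geom_pgf (p m) z
  end.

Lemma prod_geom_pgf_nonneg (p : nat -> R) (z : R) (n : nat) :
  (forall i, (i < n)%nat -> 0 < p i <= 1) -> 0 < z <= 1 -> 0 <= prod_geom_pgf p z n.
Proof.
  induction n as [|n IH]; intros Hp Hz; simpl; [lra|].
  apply Rmult_le_pos.
  - apply IH; auto.
  - apply geom_pgf_nonneg; auto.
Qed.

Lemma prod_geom_pgf_1 (p : nat -> R) (n : nat) :
  (forall i, (i < n)%nat -> 0 < p i <= 1) -> prod_geom_pgf p 1 n = 1.
Proof.
  induction n as [|n IH]; intros Hp; simpl; [reflexivity|].
  rewrite IH by (intros; apply Hp; lia). rewrite geom_pgf_1 by (apply Hp; lia). ring.
Qed.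

Definition law_pgf_upto (p : nat -> R) (n : nat) (z : R) (M : nat) : R :=
  sum_f_R0 (fun s => law_sum p n s * z ^ s) M.

Lemma law_pgf_upto_O (p : nat -> R) (z : R) (M : nat) : law_pgf_upto p 0 z M = 1.
Proof.
  unfold law_pgf_upto. induction M as [|M IH]; [simpl; ring|].
  rewrite tech5, IH. simpl. ring.
Qed.

Lemma law_pgf_upto_S (p : nat -> R) (n : nat) (z : R) (M : nat) :
  law_pgf_upto p (S n) z M =
  sum_f_R0 (fun k => geom_pmf (p n) k * z ^ k * law_pgf_upto p n z (M - k)) M.
Proof.
  unfold law_pgf_upto. rewrite <- sum_f_R0_conv. apply sum_eq. intros s _.
  simpl law_sum. rewrite Rmult_comm, scal_sum. apply sum_eq. intros k Hk.
  replace (z ^ s) with (z ^ k * z ^ (s - k)) by (rewrite <- pow_add; f_equal; lia).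
  ring.
Qed.

Lemma law_pgf_upto_nonneg (p : nat -> R) (n : nat) (z : R) (M : nat) :
  (forall i, (i < n)%nat -> 0 < p i <= 1) -> 0 <= z -> 0 <= law_pgf_upto p n z M.
Proof.
  intros Hp Hz. apply cond_pos_sum. intro s.
  apply Rmult_le_pos; [apply law_sum_nonneg; auto | apply pow_le; lra].
Qed.

Lemma law_pgf_upto_mono (p : nat -> R) (n : nat) (z : R) (M1 M2 : nat) :
  (forall i, (i < n)%nat -> 0 < p i <= 1) -> 0 <= z -> (M1 <= M2)%nat ->
  law_pgf_upto p n z M1 <= law_pgf_upto p n z M2.
Proof.
  intros Hp Hz. apply sum_f_R0_le_prefix. intro s.
  apply Rmult_le_pos; [apply law_sum_nonneg; auto | apply pow_le; lra].
Qed.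

Lemma law_pgf_upto_le_prod (p : nat -> R) (n : nat) (z : R) (M : nat) :
  (forall i, (i < n)%nat -> 0 < p i <= 1) -> 0 < z <= 1 ->
  law_pgf_upto p n z M <= prod_geom_pgf p z n.
Proof.
  revert M. induction n as [|n IH]; intros M Hp Hz.
  - rewrite law_pgf_upto_O. simpl. lra.
  - assert (Hp' : forall i, (i < n)%nat -> 0 < p i <= 1) by (intros; apply Hp; lia).
    assert (Hpn : 0 < p n <= 1) by (apply Hp; lia).
    rewrite law_pgf_upto_S. simpl prod_geom_pgf.
    apply Rle_trans with
      (sum_f_R0 (fun k => geom_pmf (p n) k * z ^ k * prod_geom_pgf p z n) M).
    + apply sum_Rle. intros k _. apply Rmult_le_compat_l; [|apply IH; auto].
      apply Rmult_le_pos; [apply geom_pmf_nonneg | apply pow_le]; lra.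
    + rewrite <- scal_sum.
      apply Rmult_le_compat_l; [apply prod_geom_pgf_nonneg; auto|].
      apply sum_geom_pmf_pow_le; auto.
Qed.

(* Each Y_i exceeds K with probability (1 - p_i)^K, and S <= n K once no Y_i exceeds K. *)
Lemma law_pgf_upto_1_ge (p : nat -> R) (n K : nat) :
  (forall i, (i < n)%nat -> 0 < p i <= 1) ->
  1 - sumR (fun i => (1 - p i) ^ K) n <= law_pgf_upto p n 1 (n * K).
Proof.
  induction n as [|n IH]; intros Hp.
  - rewrite law_pgf_upto_O. simpl. lra.
  - assert (Hp' : forall i, (i < n)%nat -> 0 < p i <= 1) by (intros; apply Hp; lia).
    assert (Hpn : 0 < p n <= 1) by (apply Hp; lia).
    specialize (IH Hp').
    assert (Hweight : forall k, 0 <= geom_pmf (p n) k * 1 ^ k)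
      by (intro k; rewrite pow1, Rmult_1_r; apply geom_pmf_nonneg; auto).
    rewrite law_pgf_upto_S. simpl sumR.
    apply Rle_trans with
      (sum_f_R0 (fun k => geom_pmf (p n) k * 1 ^ k * law_pgf_upto p n 1 (n * K)) K).
    2:{ apply Rle_trans with
          (sum_f_R0 (fun k => geom_pmf (p n) k * 1 ^ k * law_pgf_upto p n 1 (S n * K - k)) K).
        - apply sum_Rle. intros k Hk. apply Rmult_le_compat_l; [apply Hweight|].
          apply law_pgf_upto_mono; [auto | lra | simpl; lia].
        - apply sum_f_R0_le_prefix; [|simpl; lia].
          intro k. apply Rmult_le_pos; [apply Hweight|].
          apply law_pgf_upto_nonneg; [auto | lra]. }
    rewrite <- scal_sum, sum_geom_pmf_pow, geom_pgf_1, Rmult_1_r, Rmult_1_l by lra.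
    assert (0 <= (1 - p n) ^ K <= 1)
      by (split; [apply pow_le | rewrite <- (pow1 K) at 2; apply pow_incr]; lra).
    assert (0 <= sumR (fun i => (1 - p i) ^ K) n)
      by (apply sumR_nonneg; intros i Hi; apply pow_le; pose proof (Hp' i Hi); lra).
    nra.
Qed.

Lemma inv_1_plus_bounds (u : R) : 0 < u -> 0 < 1 / (1 + u) <= 1.
Proof.
  intros Hu. split; [apply Rdiv_lt_0_compat; lra|].
  apply Rmult_le_reg_r with (1 + u); [lra|]. field_simplify; lra.
Qed.

(* AM-GM gives p / (u + p) <= (u + p) / (4 u) = (1 + (-1/2 + p/(2u))) / 2. *)
Lemma geom_pgf_shift_le (p u : R) : 0 < p <= 1 -> 0 < u ->
  geom_pgf p (1 / (1 + u)) <= / 2 * exp (- / 2 + p / (2 * u)).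
Proof.
  intros Hp Hu. unfold geom_pgf.
  replace (p * (1 / (1 + u)) / (1 - (1 - p) * (1 / (1 + u)))) with (p / (u + p))
    by (field; lra).
  pose proof (exp_ineq1_le (- / 2 + p / (2 * u))).
  apply Rle_trans with (/ 2 * (1 + (- / 2 + p / (2 * u)))); [|lra].
  replace (/ 2 * (1 + (- / 2 + p / (2 * u)))) with ((u + p) / (4 * u)) by (field; lra).
  apply Rmult_le_reg_r with (4 * u * (u + p)); [nra|].
  replace (p / (u + p) * (4 * u * (u + p))) with (4 * u * p) by (field; lra).
  replace ((u + p) / (4 * u) * (4 * u * (u + p))) with ((u + p) * (u + p)) by (field; lra).
  pose proof (pow2_ge_0 (u - p)). nra.
Qed.

Lemma prod_geom_pgf_shift_le (p : nat -> R) (u : R) (n : nat) :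
  (forall i, (i < n)%nat -> 0 < p i <= 1) -> 0 < u ->
  prod_geom_pgf p (1 / (1 + u)) n <= (/ 2) ^ n * exp (- INR n / 2 + sumR p n / (2 * u)).
Proof.
  induction n as [|n IH]; intros Hp Hu.
  - simpl. replace (- 0 / 2 + 0 / (2 * u)) with 0 by (field; lra). rewrite exp_0. lra.
  - assert (Hpn : 0 < p n <= 1) by (apply Hp; lia).
    assert (Hp' : forall i, (i < n)%nat -> 0 < p i <= 1) by (intros; apply Hp; lia).
    pose proof (inv_1_plus_bounds u Hu) as Hz.
    replace ((/ 2) ^ S n * exp (- INR (S n) / 2 + sumR p (S n) / (2 * u))) with
      ((/ 2) ^ n * exp (- INR n / 2 + sumR p n / (2 * u)) *
       (/ 2 * exp (- / 2 + p n / (2 * u)))).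
    2:{ rewrite S_INR. simpl sumR. simpl pow.
        replace (- (INR n + 1) / 2 + (sumR p n + p n) / (2 * u)) with
          ((- INR n / 2 + sumR p n / (2 * u)) + (- / 2 + p n / (2 * u))) by (field; lra).
        rewrite (exp_plus (- INR n / 2 + sumR p n / (2 * u))). ring. }
    simpl prod_geom_pgf. apply Rmult_le_compat.
    + apply prod_geom_pgf_nonneg; auto.
    + apply geom_pgf_nonneg; auto.
    + apply IH; auto.
    + apply geom_pgf_shift_le; auto.
Qed.

Definition head_series (p : nat -> R) (n : nat) (t : R) (s : nat) : R :=
  if Rlt_dec t (INR s) then 0 else law_sum p n s.

Lemma tail_head_sum (p : nat -> R) (n : nat) (t : R) (M : nat) :
  sum_f_R0 (tail_series p n t) M + sum_f_R0 (head_series p n t) M = law_pgf_upto p n 1 M.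
Proof.
  rewrite <- sum_plus. apply sum_eq. intros s _.
  unfold tail_series, head_series. rewrite pow1. destruct (Rlt_dec t (INR s)); ring.
Qed.

Lemma head_series_nonneg (p : nat -> R) (n : nat) (t : R) (s : nat) :
  (forall i, (i < n)%nat -> 0 < p i <= 1) -> 0 <= head_series p n t s.
Proof.
  intros Hp. unfold head_series. destruct (Rlt_dec t (INR s)); [lra|].
  apply law_sum_nonneg; auto.
Qed.

Lemma tail_series_nonneg (p : nat -> R) (n : nat) (t : R) (s : nat) :
  (forall i, (i < n)%nat -> 0 < p i <= 1) -> 0 <= tail_series p n t s.
Proof.
  intros Hp. unfold tail_series. destruct (Rlt_dec t (INR s)); [|lra].
  apply law_sum_nonneg; auto.
Qed.

Lemma head_sum_le_markov (p : nat -> R) (n : nat) (t u : R) (M : nat) :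
  (forall i, (i < n)%nat -> 0 < p i <= 1) -> 0 < u ->
  sum_f_R0 (head_series p n t) M <= exp (u * t) * law_pgf_upto p n (1 / (1 + u)) M.
Proof.
  intros Hp Hu. unfold law_pgf_upto. rewrite scal_sum. apply sum_Rle. intros s _.
  assert (Hlaw : 0 <= law_sum p n s) by (apply law_sum_nonneg; auto).
  assert (Hpow : 0 < (1 + u) ^ s) by (apply pow_lt; lra).
  unfold head_series. destruct (Rlt_dec t (INR s)) as [|Hst].
  - apply Rmult_le_pos; [|left; apply exp_pos].
    apply Rmult_le_pos; [auto | apply pow_le; left; apply inv_1_plus_bounds, Hu].
  - assert (Hgrowth : (1 + u) ^ s <= exp (u * t)).
    { apply Rle_trans with (exp u ^ s).
      - apply pow_incr. pose proof (exp_ineq1_le u). lra.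
      - rewrite <- exp_mult_INR. apply exp_le_compat. apply Rnot_lt_le in Hst. nra. }
    unfold Rdiv. rewrite Rmult_1_l, pow_inv.
    apply Rmult_le_reg_r with ((1 + u) ^ s); [auto|].
    replace (law_sum p n s * / (1 + u) ^ s * exp (u * t) * (1 + u) ^ s)
      with (law_sum p n s * exp (u * t)) by (field; lra).
    apply Rmult_le_compat_l; auto.
Qed.

Lemma head_sum_le (N : nat) (p : nat -> R) (M : nat) :
  (1 <= N)%nat -> (forall i, (i < N)%nat -> 0 < p i <= 1) ->
  sum_f_R0 (head_series p N (INR N ^ 2 / (4 * sumR p N))) M <= 16 / (9 * INR N).
Proof.
  intros HN Hp.
  assert (HNr : 1 <= INR N) by (apply (le_INR 1); auto).
  assert (HP : 0 < sumR p N) by (apply sumR_pos; auto; intros i Hi; apply Hp; auto).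
  set (u := sumR p N / INR N).
  assert (Hu : 0 < u) by (apply Rdiv_lt_0_compat; lra).
  eapply Rle_trans; [apply head_sum_le_markov with (u := u); auto|].
  eapply Rle_trans.
  { apply Rmult_le_compat_l; [left; apply exp_pos|].
    eapply Rle_trans; [apply law_pgf_upto_le_prod; auto; apply inv_1_plus_bounds, Hu|].
    apply prod_geom_pgf_shift_le; auto. }
  replace (- INR N / 2 + sumR p N / (2 * u)) with 0 by (unfold u; field; lra).
  replace (u * (INR N ^ 2 / (4 * sumR p N))) with (INR N * / 4) by (unfold u; field; lra).
  rewrite exp_0, Rmult_1_r, exp_mult_INR, <- Rpow_mult_distr.
  apply Rle_trans with ((3 / 4) ^ N).
  - apply pow_incr. pose proof exp_quarter_le. pose proof (exp_pos (/ 4)). lra.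
  - pose proof (INR_mul_pow_3_4_le N).
    apply Rmult_le_reg_l with (INR N); [lra|].
    replace (INR N * (16 / (9 * INR N))) with (16 / 9) by (field; lra). lra.
Qed.

Theorem lemma2p4 (N : nat) (p : nat -> R)
  (HN : (1 <= N)%nat)
  (Hp : forall i, (i < N)%nat -> 0 < p i <= 1) :
  exists l : R,
    infinite_sum (tail_series p N (INR N ^ 2 / (4 * sumR p N))) l /\
    l >= 1 - 16 / (9 * INR N).
Proof.
  set (t := INR N ^ 2 / (4 * sumR p N)).
  assert (Htail_le_mass : forall M, sum_f_R0 (tail_series p N t) M <= law_pgf_upto p N 1 M).
  { intro M. rewrite <- (tail_head_sum p N t M).
    pose proof (cond_pos_sum _ M (fun s => head_series_nonneg p N t s Hp)). lra. }
  assert (Hmass_le_1 : forall M, law_pgf_upto p N 1 M <= 1).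
  { intro M. rewrite <- (prod_geom_pgf_1 p N Hp) at 2. apply law_pgf_upto_le_prod; auto; lra. }
  destruct (growing_cv (sum_f_R0 (tail_series p N t))) as [l Hl].
  - intro M. rewrite tech5. pose proof (tail_series_nonneg p N t (S M) Hp). lra.
  - exists 1. intros x [M ->]. specialize (Htail_le_mass M). specialize (Hmass_le_1 M). lra.
  - exists l. split; [exact Hl|]. apply Rle_ge, le_epsilon. intros eps Heps.
    destruct (sumR_pow_eventually_le (fun i => 1 - p i) N) with (d := eps)
      as [K HK]; [intros i Hi; pose proof (Hp i Hi); lra | exact Heps |].
    specialize (HK K (le_n K)).
    pose proof (law_pgf_upto_1_ge p N K Hp) as Hmass.
    pose proof (tail_head_sum p N t (N * K)) as Hsplit.
    pose proof (head_sum_le N p (N * K) HN Hp) as Hhead. fold t in Hhead.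
    pose proof (sum_incr _ (N * K) l Hl (fun s => tail_series_nonneg p N t s Hp)) as Hl_ge.
    lra.
Qed.
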